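(* Let $V$ be a countable dimensional vector space with a fixed basis $E$. On the set of generalized flags in $V$ that are weakly compatible with $E$, the relation of $E$-commensurability is an equivalence relation. Moreover, in the definition of $E$-commensurability, condition (ii) may equivalently be replaced by (ii$'$): $\dim(F/(F\cap\varphi(F)))=\dim(\varphi(F)/(F\cap\varphi(F)))$ for every $F\in\mathcal{F}$.
   Context: $k$ is a field of characteristic $0$. A chain of subspaces is a set of pairwise distinct subspaces totally ordered by inclusion; $\mathcal{C}'$ (resp. $\mathcal{C}''$) denotes elements with an immediate successor (resp. predecessor), $F^+$ the immediate successor of $F\in\mathcal{C}'$. A generalized flag is a chain $\mathcal{F}$ with $\mathcal{F}=\mathcal{F}'\cup\mathcal{F}''$ and $V\setminus\{0\}=\bigcup_{F\in\mathcal{F}'}(F^+\setminus F)$; for $v\ne0$, $F'_v$ is the unique $F\in\mathcal{F}'$ with $v\in F^+\setminus F$. For a chain $\mathcal{C}$, $[v]_\mathcal{C}:=\{u:\forall C\in\mathcal{C},\ u\in C\iff v\in C\}$ and $fl(\mathcal{C})$ is the unique generalized flag inducing the same partition. A basis $\{e_\alpha\}_{\alpha\in A}$ is compatible with $\mathcal{F}$ if there is a strict partial order $\prec$ on $A$ (incomparability being an equivalence relation) with $F'_{e_\alpha}=\mathrm{span}\{e_\beta:\beta\prec\alpha\}$ and $\mathcal{F}=fl(\{F'_{e_\alpha}\})$. A generalized flag $\mathcal{F}$ is weakly compatible with $E$ if it is compatible with some basis $L$ of $V$ such that $E\setminus(E\cap L)$ is finite. Two generalized flags $\mathcal{F},\mathcal{G}$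 are $E$-commensurable if both are weakly compatible with $E$ and there exist an inclusion-preserving bijection $\varphi:\mathcal{F}\to\mathcal{G}$ and a finite dimensional subspace $U\subset V$ such that for every $F\in\mathcal{F}$: (i) $F\subset\varphi(F)+U$ and $\varphi(F)\subset F+U$; (ii) $\dim(F\cap U)=\dim(\varphi(F)\cap U)$. *)

From HB Require Import structures.
From mathcomp Require Import all_boot all_order all_algebra.
From mathcomp Require Import boolp classical_sets cardinality.
Set Implicit Arguments. Unset Strict Implicit. Unset Printing Implicit Defensive.
Import GRing.Theory.
Local Open Scope classical_set_scope.
Local Open Scope ring_scope.

Section Defs.
Variables (k : fieldType) (V : lmodType k).

Definition span (A : set V) : set V :=
  [set v | exists n (f : 'I_n -> V) (c : 'I_n -> k),
      (forall i, A (f i)) /\ v = \sum_(i < n) c i *: f i].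

Definition subspace (S : set V) : Prop :=
  S 0 /\ forall (a : k) x y, S x -> S y -> S (a *: x + y).

Definition ssum (A B : set V) : set V :=
  [set x | exists a b, A a /\ B b /\ x = a + b].

Definition lin_indep (L : set V) : Prop :=
  forall n (f : 'I_n -> V) (c : 'I_n -> k), injective f ->
    (forall i, L (f i)) -> \sum_(i < n) c i *: f i = 0 -> forall i, c i = 0.

Definition is_basis (L : set V) : Prop := lin_indep L /\ span L = setT.

Definition fin_dim (U : set V) : Prop :=
  exists n (f : 'I_n -> V), U = span (range f).

(* quot_dim A B n : B is a subspace of A and dim (A / B) = n
   (n vectors of A, linearly independent modulo B, spanning A modulo B) *)
Definition quot_dim (A B : set V) (n : nat) : Prop :=
  B `<=` A /\
  exists f : 'I_n -> V, (forall i, A (f i)) /\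
    (forall c : 'I_n -> k, B (\sum_(i < n) c i *: f i) -> forall i, c i = 0) /\
    A `<=` ssum B (span (range f)).

Definition dim_is (S : set V) (n : nat) : Prop := quot_dim S [set 0] n.

(* chain of subspaces (a set of subspaces, hence pairwise distinct) *)
Definition chain (C : set (set V)) : Prop :=
  (forall S, C S -> subspace S) /\
  (forall S T, C S -> C T -> S `<=` T \/ T `<=` S).

Definition isSucc (C : set (set V)) (F G : set V) : Prop :=
  C F /\ C G /\ F `<` G /\
  (forall H, C H -> F `<=` H -> H `<=` G -> H = F \/ H = G).

Definition gen_flag (C : set (set V)) : Prop :=
  chain C /\
  (forall F, C F -> (exists G, isSucc C F G) \/ (exists G, isSucc C G F)) /\
  (forall v, v <> 0 <-> exists F G, isSucc C F G /\ G v /\ ~ F v).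

Definition Fprime (C : set (set V)) (v : V) (F : set V) : Prop :=
  exists G, isSucc C F G /\ G v /\ ~ F v.

Definition cls (C : set (set V)) (v : V) : set V :=
  [set u | forall S, C S -> (S u <-> S v)].

Definition same_partition (C D : set (set V)) : Prop :=
  forall v, cls C v = cls D v.

(* the basis L (indexed by itself) is compatible with the generalized flag F;
   "F = fl(C)" is expressed as "F (a generalized flag) induces the same
   partition as C" *)
Definition compatible (F : set (set V)) (L : set V) : Prop :=
  is_basis L /\
  exists lt : V -> V -> Prop,
    (forall a, L a -> ~ lt a a) /\
    (forall a b c, L a -> L b -> L c -> lt a b -> lt b c -> lt a c) /\
    (let incomp a b := ~ lt a b /\ ~ lt b a in
     forall a b c, L a -> L b -> L c -> incomp a b -> incomp b c -> incomp a c) /\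
    (forall a, L a -> Fprime F a (span [set b | L b /\ lt b a])) /\
    same_partition F [set S | exists a, L a /\ Fprime F a S].

Definition weakly_compatible (E : set V) (F : set (set V)) : Prop :=
  gen_flag F /\ exists L, compatible F L /\ finite_set (E `\` L).

Definition commens_with (cond : set V -> set V -> set V -> Prop)
    (E : set V) (F G : set (set V)) : Prop :=
  weakly_compatible E F /\ weakly_compatible E G /\
  exists (phi : set V -> set V) (U : set V),
    (forall S, F S -> G (phi S)) /\
    (forall S T, F S -> F T -> phi S = phi T -> S = T) /\
    (forall T, G T -> exists S, F S /\ phi S = T) /\
    (forall S T, F S -> F T -> S `<=` T -> phi S `<=` phi T) /\
    fin_dim U /\
    (forall S, F S ->
       S `<=` ssum (phi S) U /\ phi S `<=` ssum S U /\ cond U S (phi S)).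

Definition cond_ii (U S T : set V) : Prop :=
  forall n, dim_is (S `&` U) n <-> dim_is (T `&` U) n.

Definition cond_ii' (U S T : set V) : Prop :=
  forall n, quot_dim S (S `&` T) n <-> quot_dim T (S `&` T) n.

Definition E_commensurable := commens_with cond_ii.
Definition E_commensurable' := commens_with cond_ii'.

End Defs.

From Pilot Require Import Defs.
From HB Require Import structures.
From mathcomp Require Import all_boot all_order all_algebra.
From mathcomp Require Import boolp classical_sets cardinality.
Local Open Scope classical_set_scope.
Local Open Scope ring_scope.
Import GRing.Theory.

(* Let S, T be subspaces with S <= T + U and T <= S + U, U finite dimensional.
   Lift a basis of T/(S cap T) to vectors s_j + u_j with s_j in S and u_j in U;
   together with a basis of S cap U, the u_j form a basis of U cap (S + T).
   Hence dim (U cap (S + T)) = dim (S cap U) + dim (T/(S cap T)), and by symmetry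
   also = dim (T cap U) + dim (S/(S cap T)), so conditions (ii) and (ii') agree.
   For E-commensurability, phi = id with U = 0 gives reflexivity and phi^-1
   gives symmetry; for transitivity compose the bijections and take U1 + U2,
   moving (ii) to the larger space through (ii'), which does not involve U. *)

Section OrdinalConcat.
Variables (T : Type) (p q : nat).

Definition catf (x : 'I_p -> T) (y : 'I_q -> T) (i : 'I_(p + q)) : T :=
  match split i with inl a => x a | inr b => y b end.

Lemma catf_lshift x y a : catf x y (lshift q a) = x a.
Proof. by rewrite /catf (unsplitK (inl a : 'I_p + 'I_q)). Qed.

Lemma catf_rshift x y b : catf x y (rshift p b) = y b.
Proof. by rewrite /catf (unsplitK (inr b : 'I_p + 'I_q)). Qed.

Lemma split_ord_ind (P : 'I_(p + q) -> Prop) :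
  (forall a, P (lshift q a)) -> (forall b, P (rshift p b)) -> forall i, P i.
Proof. by move=> Pl Pr i; rewrite -(splitK i); case: (split i). Qed.

End OrdinalConcat.
Arguments catf {T p q}.

Lemma pointwise_iff_unique {P Q : nat -> Prop} {p p'} : P p -> Q p' ->
  (forall n n', P n -> P n' -> n = n') -> (forall n n', Q n -> Q n' -> n = n') ->
  (forall n, P n <-> Q n) <-> p = p'.
Proof.
move=> Pp Qp' uniqP uniqQ; split => [PQ | pp' n]; first exact/(uniqQ _ _ _ Qp')/PQ.
by rewrite -pp' in Qp'; split => [/(uniqP _ _ Pp) <-|/(uniqQ _ _ Qp') <-].
Qed.

Local Notation spanf g := (Defs.span (range g)).

Section FiniteSpans.
Variables (k : fieldType) (V : lmodType k).
Implicit Types (A B S T U : set V).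

Lemma sum_catf p q (c : 'I_(p + q) -> k) (x : 'I_p -> V) (y : 'I_q -> V) :
  \sum_i c i *: catf x y i =
  \sum_a c (lshift q a) *: x a + \sum_b c (rshift p b) *: y b.
Proof.
by rewrite big_split_ord; congr (_ + _); apply: eq_bigr => i _;
  rewrite ?catf_lshift ?catf_rshift.
Qed.

Lemma subspace0 {S} : subspace S -> S 0.
Proof. by case. Qed.

Lemma subspaceD {S x y} : subspace S -> S x -> S y -> S (x + y).
Proof. by move=> [_ HS] Sx Sy; have := HS 1 x y Sx Sy; rewrite scale1r. Qed.

Lemma subspaceZ {S} a {x} : subspace S -> S x -> S (a *: x).
Proof. by move=> [S0 HS] Sx; have := HS a x 0 Sx S0; rewrite addr0. Qed.

Lemma subspaceN {S x} : subspace S -> S x -> S (- x).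
Proof. by move=> HS Sx; rewrite -scaleN1r; apply: subspaceZ. Qed.

Lemma subspaceB {S x y} : subspace S -> S x -> S y -> S (x - y).
Proof. by move=> HS Sx Sy; apply: subspaceD => //; apply: subspaceN. Qed.

Lemma subspace_sum {S n} (c : 'I_n -> k) (f : 'I_n -> V) :
  subspace S -> (forall i, S (f i)) -> S (\sum_i c i *: f i).
Proof.
move=> HS Sf; apply: (big_ind S) => [|x y|i _]; first exact: subspace0.
  exact: subspaceD.
exact: subspaceZ.
Qed.

Lemma subspace_set0 : subspace [set (0 : V)].
Proof. by split => // a x y -> ->; rewrite scaler0 addr0. Qed.

Lemma subspaceI {A B} : subspace A -> subspace B -> subspace (A `&` B).
Proof.
move=> [A0 HA] [B0 HB]; split => // a x y [Ax Bx] [Ay By].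
by split; [apply: HA | apply: HB].
Qed.

Lemma ssumC A B : ssum A B = ssum B A.
Proof. by apply/seteqP; split => v [a [b [Aa [Bb ->]]]]; exists b, a; rewrite addrC. Qed.

Lemma ssum_subl A {B} : subspace B -> A `<=` ssum A B.
Proof.
by move=> HB v Av; exists v, 0; rewrite addr0; split => //; split => //; exact: subspace0.
Qed.

Lemma ssum_subr {A} B : subspace A -> B `<=` ssum A B.
Proof. by move=> HA v Bv; rewrite ssumC; apply: ssum_subl. Qed.

Lemma ssumSr {S T U1 U} : U1 `<=` U -> S `<=` ssum T U1 -> S `<=` ssum T U.
Proof.
move=> U1U ST v /ST [a [b [Ta [U1b ->]]]].
by exists a, b; split => //; split => //; apply: U1U.
Qed.

Lemma ssum_trans {S T R U1 U2} :
  S `<=` ssum T U1 -> T `<=` ssum R U2 -> S `<=` ssum R (ssum U1 U2).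
Proof.
move=> ST TR v /ST [t [u1 [/TR [r [u2 [Rr [U2u2 ->]]]] [U1u1 ->]]]].
exists r, (u1 + u2); split => //; split; first by exists u1, u2.
by rewrite -addrA [u2 + u1]addrC.
Qed.

Lemma spanP m (g : 'I_m -> V) v :
  spanf g v <-> exists d : 'I_m -> k, v = \sum_j d j *: g j.
Proof.
split; last by move=> [d ->]; exists m, g, d; split => // i; exists i.
move=> [n [f [c [gf ->]]]].
have gf' i : exists j, g j = f i by case: (gf i) => j _ <-; exists j.
have [h fh] := choice gf'.
exists (fun j => \sum_(i < n | h i == j) c i).
rewrite (eq_bigr (fun i => c i *: g (h i))) => [|i _]; last by rewrite fh.
under [RHS]eq_bigr => j _ do rewrite scaler_suml.
rewrite (exchange_big_dep xpredT) //=; apply: eq_bigr => i _.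
by rewrite (big_pred1 (h i)) // => j; rewrite eq_sym.
Qed.

Lemma span_subspace {m} (g : 'I_m -> V) : subspace (spanf g).
Proof.
split; first by apply/spanP; exists (fun=> 0); rewrite big1 // => i _; rewrite scale0r.
move=> a x y /spanP [d1 ->] /spanP [d2 ->]; apply/spanP.
exists (fun j => a * d1 j + d2 j); rewrite scaler_sumr -big_split /=.
by apply: eq_bigr => j _; rewrite scalerDl scalerA.
Qed.

Lemma fin_dim_subspace {U} : fin_dim U -> subspace U.
Proof. by move=> [m [g ->]]; apply: span_subspace. Qed.

Lemma ssum_span m1 m2 (g1 : 'I_m1 -> V) (g2 : 'I_m2 -> V) :
  ssum (spanf g1) (spanf g2) = spanf (catf g1 g2).
Proof.
apply/seteqP; split.
  move=> v [a [b [/spanP [d1 ->] [/spanP [d2 ->] ->]]]].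
  apply/spanP; exists (catf d1 d2); rewrite sum_catf.
  by congr (_ + _); apply: eq_bigr => i _; rewrite ?catf_lshift ?catf_rshift.
move=> v /spanP [d ->]; rewrite sum_catf.
by do 2 eexists; split; last split; [apply/spanP; eexists | apply/spanP; eexists |].
Qed.

Lemma fin_dim_set0 : fin_dim [set (0 : V)].
Proof.
exists 0%N, (fun=> 0); apply/seteqP; split => [v -> | v /spanP [d ->]].
  exact/subspace0/span_subspace.
by rewrite big_ord0.
Qed.

Lemma fin_dim_ssum {U1 U2} : fin_dim U1 -> fin_dim U2 -> fin_dim (ssum U1 U2).
Proof.
by move=> [m1 [g1 ->]] [m2 [g2 ->]]; exists (m1 + m2)%N, (catf g1 g2); apply: ssum_span.
Qed.

Lemma tall_mx_kernel_neq0 m n (M : 'M[k]_(n, m)) :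
  (m < n)%N -> exists2 c : 'rV_n, c != 0 & c *m M = 0.
Proof.
move=> ltmn; have /rowV0Pn [c /sub_kermxP cM0 nz_c] : kermx M != 0.
  by rewrite kermx_eq0 -row_leq_rank -ltnNge (leq_ltn_trans (rank_leq_col M)).
by exists c.
Qed.

Lemma indep_le {B n m} (f : 'I_n -> V) (g : 'I_m -> V) :
  subspace B -> (forall i, ssum B (spanf g) (f i)) ->
  (forall c : 'I_n -> k, B (\sum_i c i *: f i) -> forall i, c i = 0) ->
  (n <= m)%N.
Proof.
move=> HB fBg indep_f.
have fh i : exists bd : V * ('I_m -> k), B bd.1 /\ f i = bd.1 + \sum_j bd.2 j *: g j.
  by have [b [s [Bb [/spanP [d ->] ->]]]] := fBg i; exists (b, d).
have [h {}fh] := choice fh.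
pose M := \matrix_(i < n, j < m) (h i).2 j.
rewrite leqNgt; apply/negP => /(@tall_mx_kernel_neq0 _ _ M) [c nz_c cM0].
have Bc : B (\sum_i c 0 i *: f i).
  suff -> : \sum_i c 0 i *: f i =
            \sum_i c 0 i *: (h i).1 + \sum_j (c *m M) 0 j *: g j.
    rewrite cM0 [X in _ + X]big1 => [|j _]; last by rewrite mxE scale0r.
    by rewrite addr0; apply: subspace_sum => // i; case: (fh i).
  under [X in _ + X]eq_bigr do rewrite !mxE scaler_suml.
  rewrite exchange_big -big_split /=; apply: eq_bigr => i _.
  rewrite (proj2 (fh i)) scalerDr scaler_sumr; congr (_ + _).
  by apply: eq_bigr => j _; rewrite mxE scalerA.
move/negP: nz_c; apply; apply/eqP/rowP => i.
by rewrite mxE; exact: (indep_f (fun i => c 0 i) Bc).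
Qed.

Lemma quot_dim_unique {A B n n'} :
  subspace B -> quot_dim A B n -> quot_dim A B n' -> n = n'.
Proof.
move=> HB [_ [f [Af [indep_f Af_span]]]] [_ [f' [Af' [indep_f' Af'_span]]]].
apply/eqP; rewrite eqn_leq (indep_le f f' HB _ indep_f) ?(indep_le f' f HB _ indep_f') //.
  by move=> i; apply: Af_span.
by move=> i; apply: Af'_span.
Qed.

Lemma indep_extend B n (f : 'I_n -> V) a :
  subspace B -> ~ ssum B (spanf f) a ->
  (forall c : 'I_n -> k, B (\sum_i c i *: f i) -> forall i, c i = 0) ->
  forall c : 'I_(n + 1) -> k, B (\sum_i c i *: catf f (fun=> a) i) ->
  forall i, c i = 0.
Proof.
move=> HB Na indep_f c; rewrite sum_catf big_ord1.
set s := \sum_(i < n) _; set ca := c (rshift n ord0) => Bc.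
have ca0 : ca = 0.
  apply: contrapT => /eqP nz_ca; apply: Na.
  exists (ca^-1 *: (s + ca *: a)), (- (ca^-1 *: s)); split; first exact: subspaceZ.
  split; last by rewrite scalerDr scalerA mulVf // scale1r addrC addrA addNr add0r.
  apply/spanP; exists (fun i => - (ca^-1 * c (lshift 1 i))).
  by rewrite /s scaler_sumr -sumrN; apply: eq_bigr => i _; rewrite scalerA scaleNr.
rewrite ca0 scale0r addr0 in Bc.
apply: split_ord_ind => [i|j]; first exact: indep_f Bc i.
by rewrite (_ : j = ord0) //; apply: val_inj; case: j => [[]].
Qed.

Lemma quot_dim_exists {A B B' m} (g : 'I_m -> V) :
  subspace A -> subspace B -> subspace B' -> B `<=` A ->
  A `<=` ssum B' (spanf g) -> (forall v, A v -> B' v -> B v) ->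
  exists n, quot_dim A B n.
Proof.
move=> HA HB HB' BA AB'g AB'B; apply: contrapT => no_dim.
pose indep n := exists f : 'I_n -> V, (forall i, A (f i)) /\
  (forall c : 'I_n -> k, B (\sum_i c i *: f i) -> forall i, c i = 0).
have indep_le_m n : indep n -> (n <= m)%N.
  move=> [f [Af indep_f]]; apply: (indep_le _ g HB') => [i|c B'c]; first exact: AB'g.
  by apply: indep_f; apply: AB'B B'c; apply: subspace_sum.
have indep_all n : indep n.
  elim: n => [|n [f [Af indep_f]]]; first by exists (fun=> 0); split => [[]|c _ []].
  have : ~ (A `<=` ssum B (spanf f)).
    by move=> Af_span; apply: no_dim; exists n; split => //; exists f.
  move=> /existsNP [a /not_implyP [Aa Na]].
  rewrite -addn1; exists (catf f (fun=> a)); split; last exact: indep_extend.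
  by apply: split_ord_ind => i; rewrite ?catf_lshift ?catf_rshift.
by have := indep_le_m _ (indep_all m.+1); rewrite ltnn.
Qed.

Section DimSsumCap.
Context {S T : set V} {m : nat} {g : 'I_m -> V} {p q : nat}.
Context {x : 'I_p -> V} {t s u : 'I_q -> V}.
Hypotheses (HS : subspace S) (HT : subspace T).
Hypotheses (x_SU : forall i, (S `&` spanf g) (x i))
  (x_indep : forall c, [set 0] (\sum_i c i *: x i) -> forall i, c i = 0)
  (x_span : S `&` spanf g `<=` ssum [set 0] (spanf x)).
Hypotheses (t_T : forall j, T (t j))
  (t_indep : forall c, (S `&` T) (\sum_j c j *: t j) -> forall j, c j = 0)
  (t_span : T `<=` ssum (S `&` T) (spanf t)).
Hypotheses (s_S : forall j, S (s j)) (u_U : forall j, spanf g (u j))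
  (t_su : forall j, t j = s j + u j).

Let HU := span_subspace g.

Let sum_t_split (b : 'I_q -> k) :
  \sum_j b j *: t j = \sum_j b j *: s j + \sum_j b j *: u j.
Proof. by rewrite -big_split /=; apply: eq_bigr => j _; rewrite t_su scalerDr. Qed.

Lemma lifted_basis_mem i : (spanf g `&` ssum S T) (catf x u i).
Proof.
elim/split_ord_ind: i => [i|j]; rewrite ?catf_lshift ?catf_rshift.
  have [Sx Ux] := x_SU i; split => //.
  by exists (x i), 0; rewrite addr0; split => //; split => //; apply: subspace0.
split => //; exists (- s j), (t j); split; first exact: subspaceN.
by split => //; rewrite t_su addKr.
Qed.

Lemma lifted_basis_indep c :
  [set 0] (\sum_i c i *: catf x u i) -> forall i, c i = 0.
Proof.
rewrite sum_catf; set a := fun i => c (lshift q i); set b := fun j => c (rshift p j).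
move=> /= sum0.
have b0 : forall j, b j = 0.
  apply: t_indep; split; last exact: subspace_sum.
  rewrite sum_t_split.
  have -> : \sum_j b j *: u j = - \sum_i a i *: x i.
    by apply/eqP; rewrite -addr_eq0 addrC sum0.
  apply: subspaceB => //; apply: subspace_sum => // i.
  by case: (x_SU i).
have a0 : forall i, a i = 0.
  apply: x_indep; move: sum0; rewrite [X in _ + X]big1 ?addr0 // => j _.
  by rewrite [c _]b0 scale0r.
exact: split_ord_ind.
Qed.

Lemma lifted_basis_span : spanf g `&` ssum S T `<=` ssum [set 0] (spanf (catf x u)).
Proof.
move=> w [Uw [s0 [t0 [Ss0 [Tt0 w_st]]]]].
have [c0 [y [[Sc0 Tc0] [/spanP [b ->] t0_cy]]]] := t_span _ Tt0.
set z := s0 + c0 + \sum_j b j *: s j.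
have w_z : w = z + \sum_j b j *: u j by rewrite w_st t0_cy sum_t_split /z !addrA.
have Sz : S z by apply: subspaceD; [| apply: subspaceD | apply: subspace_sum].
have Uz : spanf g z.
  by have := subspaceB HU Uw (subspace_sum b u HU u_U); rewrite w_z addrK.
have [z0 [z' [z00 [/spanP [a z'_a] z_eq]]]] := x_span _ (conj Sz Uz).
exists 0, w; split => //; split; last by rewrite add0r.
apply/spanP; exists (catf a b); rewrite sum_catf.
under eq_bigr do rewrite catf_lshift.
under [X in _ + X]eq_bigr do rewrite catf_rshift.
by rewrite w_z z_eq z00 add0r z'_a.
Qed.

End DimSsumCap.

Lemma dim_ssum_cap {S T m} {g : 'I_m -> V} {p q} :
  subspace S -> subspace T -> T `<=` ssum S (spanf g) ->
  dim_is (S `&` spanf g) p -> quot_dim T (S `&` T) q ->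
  dim_is (spanf g `&` ssum S T) (p + q).
Proof.
move=> HS HT TSg [_ [x [x_SU [x_indep x_span]]]] [_ [t [t_T [t_indep t_span]]]].
have t_su j : exists su : V * V, S su.1 /\ spanf g su.2 /\ t j = su.1 + su.2.
  by have [a [b [Sa [gb ->]]]] := TSg _ (t_T j); exists (a, b).
have [h {}t_su] := choice t_su.
pose s j := (h j).1; pose u j := (h j).2.
have s_S j : S (s j) by case: (t_su j).
have u_U j : spanf g (u j) by case: (t_su j) => _ [].
have {}t_su j : t j = s j + u j by case: (t_su j) => _ [].
split.
  move=> v ->; split; first exact/subspace0/span_subspace.
  exists 0, 0; rewrite addr0.
  by split; [exact: subspace0 | split; first exact: subspace0].
exists (catf x u); split; [|split].
- exact: (lifted_basis_mem HS HT x_SU t_T s_S u_U t_su).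
- exact: (lifted_basis_indep HS HT x_SU x_indep t_T t_indep s_S t_su).
- exact: (lifted_basis_span HS x_span t_span s_S u_U t_su).
Qed.

Lemma cond_ii_iff {S T U} : subspace S -> subspace T -> fin_dim U ->
  S `<=` ssum T U -> T `<=` ssum S U -> cond_ii U S T <-> cond_ii' U S T.
Proof.
move=> HS HT [m [g ->]] STU TSU.
have H0 := subspace_set0.
have dim_capU X : subspace X -> exists p, dim_is (X `&` spanf g) p.
  move=> HX; apply: (quot_dim_exists g _ H0 H0) => //.
  - exact/subspaceI/span_subspace.
  - by move=> v ->; split; [exact: subspace0 | exact/subspace0/span_subspace].
  - by move=> v [_ gv]; exists 0, v; rewrite add0r.
have dim_quot X Y : subspace X -> subspace Y -> X `<=` ssum Y (spanf g) ->
    exists q, quot_dim X (X `&` Y) q.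
  by move=> HX HY XYg; apply: (quot_dim_exists g HX (subspaceI HX HY) HY).
have [p Sp] := dim_capU S HS; have [p' Tp] := dim_capU T HT.
have [q Sq] := dim_quot S T HS HT STU; have [q' Tq] := dim_quot T S HT HS TSU.
rewrite setIC in Tq.
have dim_eq : (p + q' = p' + q)%N.
  apply: (quot_dim_unique H0 (dim_ssum_cap HS HT TSU Sp Tq)).
  by rewrite ssumC; apply: dim_ssum_cap Tp _ => //; rewrite setIC.
rewrite /cond_ii /cond_ii' (pointwise_iff_unique Sp Tp) => [|n n'|n n'];
  try exact: quot_dim_unique.
rewrite (pointwise_iff_unique Sq Tq) => [|n n'|n n'];
  try exact/quot_dim_unique/subspaceI.
split=> [pp'|qq']; last by apply: (@addIn q'); rewrite dim_eq qq'.
by apply/esym/(@addnI p'); rewrite -dim_eq pp'.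
Qed.

Lemma cond_ii_trans U1 U2 S T R :
  subspace S -> subspace T -> subspace R -> fin_dim U1 -> fin_dim U2 ->
  S `<=` ssum T U1 -> T `<=` ssum S U1 -> T `<=` ssum R U2 -> R `<=` ssum T U2 ->
  cond_ii U1 S T -> cond_ii U2 T R -> cond_ii (ssum U1 U2) S R.
Proof.
move=> HS HT HR fU1 fU2 STU1 TSU1 TRU2 RTU2 STii TRii.
have fU := fin_dim_ssum fU1 fU2.
have U1U := ssum_subl U1 (fin_dim_subspace fU2).
have U2U := ssum_subr U2 (fin_dim_subspace fU1).
have {}STii : cond_ii (ssum U1 U2) S T.
  apply/(cond_ii_iff HS HT fU); try exact: ssumSr U1U _.
  exact/(cond_ii_iff HS HT fU1 STU1 TSU1).
have {}TRii : cond_ii (ssum U1 U2) T R.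
  apply/(cond_ii_iff HT HR fU); try exact: ssumSr U2U _.
  exact/(cond_ii_iff HT HR fU2 TRU2 RTU2).
by move=> n; apply: iff_trans (STii n) (TRii n).
Qed.

End FiniteSpans.

Section Commensurability.
Variables (k : fieldType) (V : lmodType k) (E : set V).
Implicit Types (F G H : set (set V)) (cond : set V -> set V -> set V -> Prop).

Lemma weakly_compatible_subspace {F S} : weakly_compatible E F -> F S -> subspace S.
Proof. by move=> [[[sub_F _] _] _]; apply: sub_F. Qed.

Lemma weakly_compatible_total {F S T} :
  weakly_compatible E F -> F S -> F T -> S `<=` T \/ T `<=` S.
Proof. by move=> [[[_ tot_F] _] _]; apply: tot_F. Qed.

Lemma commens_with_refl cond F :
  (forall U S, cond U S S) -> weakly_compatible E F -> commens_with cond E F F.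
Proof.
move=> cond_refl wF; do 2 split => //; exists id, [set 0].
do 2 split => //; split; first by move=> T FT; exists T.
do 2 split => //; first exact: fin_dim_set0.
by move=> S FS; split; [|split] => //; apply/ssum_subl/subspace_set0.
Qed.

Lemma commens_with_sym cond F G :
  (forall U S T, cond U S T -> cond U T S) ->
  commens_with cond E F G -> commens_with cond E G F.
Proof.
move=> cond_sym [wF [wG [phi [U [phiFG [phi_inj [phi_surj [phi_mono [fU phiU]]]]]]]]].
have psi_ex T : exists S, G T -> F S /\ phi S = T.
  have [GT|nGT] := pselect (G T); last by exists T.
  by have [S SP] := phi_surj T GT; exists S.
have [psi psiK] := choice psi_ex.
do 2 split => //; exists psi, U.
split; first by move=> T /psiK [].
split.
  move=> T1 T2 GT1 GT2 psi12.
  by rewrite -(proj2 (psiK _ GT1)) -(proj2 (psiK _ GT2)) psi12.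
split.
  move=> S FS; exists (phi S); split; first exact: phiFG.
  by have [FpS ?] := psiK _ (phiFG _ FS); apply: phi_inj.
split.
  move=> T1 T2 GT1 GT2 T12; have [FS1 phiS1] := psiK _ GT1.
  have [FS2 phiS2] := psiK _ GT2.
  case: (weakly_compatible_total wF FS1 FS2) => // S21.
  have T21 : T2 `<=` T1 by rewrite -phiS1 -phiS2; apply: phi_mono.
  by have -> : T1 = T2 by apply/seteqP.
split => // T GT; have [FS phiS] := psiK T GT.
have [SU [TU cST]] := phiU _ FS; rewrite phiS in SU TU cST.
by split; [exact: TU | split; [exact: SU | exact: cond_sym]].
Qed.

Lemma commens_with_impl cond cond' F G :
  (forall U S T, subspace S -> subspace T -> fin_dim U ->
     S `<=` ssum T U -> T `<=` ssum S U -> cond U S T -> cond' U S T) ->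
  commens_with cond E F G -> commens_with cond' E F G.
Proof.
move=> cc' [wF [wG [phi [U [phiFG [phi_inj [phi_surj [phi_mono [fU phiU]]]]]]]]].
do 2 split => //; exists phi, U; do 5 split => //.
move=> S FS; have [SU [phiSU cS]] := phiU S FS; do 2 split => //.
apply: cc' => //; first exact: weakly_compatible_subspace wF FS.
exact: weakly_compatible_subspace wG (phiFG _ FS).
Qed.

Lemma commens_with_iff cond cond' F G :
  (forall U S T, subspace S -> subspace T -> fin_dim U ->
     S `<=` ssum T U -> T `<=` ssum S U -> cond U S T <-> cond' U S T) ->
  commens_with cond E F G <-> commens_with cond' E F G.
Proof.
by move=> cc'; split; apply: commens_with_impl => U S T HS HT fU ST TS /cc'; apply.
Qed.

Lemma commens_with_trans cond F G H :
  (forall U1 U2 S T R,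
     subspace S -> subspace T -> subspace R -> fin_dim U1 -> fin_dim U2 ->
     S `<=` ssum T U1 -> T `<=` ssum S U1 -> T `<=` ssum R U2 -> R `<=` ssum T U2 ->
     cond U1 S T -> cond U2 T R -> cond (ssum U1 U2) S R) ->
  commens_with cond E F G -> commens_with cond E G H -> commens_with cond E F H.
Proof.
move=> cond_trans [wF [wG [phi1 [U1 [FG1 [inj1 [surj1 [mono1 [fU1 U1P]]]]]]]]]
  [_ [wH [phi2 [U2 [GH2 [inj2 [surj2 [mono2 [fU2 U2P]]]]]]]]].
do 2 split => //; exists (phi2 \o phi1), (ssum U1 U2).
split; first by move=> S /FG1 /GH2.
split; first by move=> S T FS FT /(inj2 _ _ (FG1 _ FS) (FG1 _ FT)); apply: inj1.
split.
  by move=> R /surj2 [T [/surj1 [S [FS <-]] <-]]; exists S.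
split; first by move=> S T FS FT ST; apply/mono2/mono1; try apply: FG1.
split; first exact: fin_dim_ssum.
move=> S FS /=; have GT := FG1 S FS; have HR := GH2 _ GT.
have sS := weakly_compatible_subspace wF FS.
have sT := weakly_compatible_subspace wG GT.
have sR := weakly_compatible_subspace wH HR.
have [SU1 [TU1 cST]] := U1P S FS; have [TU2 [RU2 cTR]] := U2P _ GT.
split; first exact: ssum_trans SU1 TU2.
split; first by rewrite [ssum U1 U2]ssumC; exact: ssum_trans RU2 TU1.
exact: cond_trans sS sT sR fU1 fU2 SU1 TU1 TU2 RU2 cST cTR.
Qed.

End Commensurability.

Theorem mainTheorem6 (k : fieldType) (V : lmodType k) (E : set V) :
  [pchar k] =i pred0 ->
  is_basis E -> countable E -> infinite_set E ->
  ((forall F, weakly_compatible E F -> E_commensurable E F F) /\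
   (forall F G, E_commensurable E F G -> E_commensurable E G F) /\
   (forall F G H, E_commensurable E F G -> E_commensurable E G H ->
      E_commensurable E F H)) /\
  (forall F G, E_commensurable E F G <-> E_commensurable' E F G).
Proof.
move=> _ _ _ _; split.
  split; first by move=> F; apply: commens_with_refl.
  split.
    by move=> F G; apply: commens_with_sym => U S T cST n; exact: iff_sym (cST n).
  by move=> F G H; apply: commens_with_trans; exact: cond_ii_trans.
by move=> F G; apply: commens_with_iff => U S T; exact: cond_ii_iff.
Qed.
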